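(* Let $G$ be a nilpotent $p$-group ($p$ prime) whose first Ulm factor $G/G_0$ has bounded period. Then $G_0$ is divisible.
   Context: For a nilpotent $p$-group $G$, the height of $g\in G$ is the greatest $n$ with $g=h^{p^n}$ for some $h\in G$; if no greatest such $n$ exists, $g$ has infinite height. $G_0$ is the (normal) subgroup of elements of infinite height, and $G/G_0$ is the first Ulm factor. Bounded period means there is $n\ge1$ with $x^n=1$ for all elements $x$. Divisible means every element has an $n$-th root in the group for every $n\ge1$. *)

From mathcomp Require Import all_boot.
Set Implicit Arguments. Unset Strict Implicit. Unset Printing Implicit Defensive.

Section GroupDefs.
Variables (T : Type) (mul : T -> T -> T) (inv : T -> T) (one : T).

Record is_group : Prop := IsGroup {
  mulA : forall x y z, mul x (mul y z) = mul (mul x y) z;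
  mul1g : forall x, mul one x = x;
  mulVg : forall x, mul (inv x) x = one
}.

Fixpoint gpow (x : T) (n : nat) : T :=
  if n is k.+1 then mul x (gpow x k) else one.

Definition comm (x y : T) : T := mul (inv x) (mul (inv y) (mul x y)).

Fixpoint upper_central (i : nat) : T -> Prop :=
  match i with
  | 0 => fun x => x = one
  | i'.+1 => fun x => forall y, upper_central i' (comm x y)
  end.

Definition nilpotent : Prop := exists c, forall x, upper_central c x.

Definition p_group (p : nat) : Prop := forall x, exists k, gpow x (p ^ k) = one.

Definition height_ge (p : nat) (g : T) (n : nat) : Prop :=
  exists h, gpow h (p ^ n) = g.

(* Since 1 = 0-th power trivially and the set of such n is downward closed,
   this literally reads: the set of such n has no greatest element. *)
Definition infinite_height (p : nat) (g : T) : Prop :=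
  ~ (exists n, height_ge p g n /\ forall m, height_ge p g m -> m <= n).

Definition G0 (p : nat) : T -> Prop := infinite_height p.

(* the first Ulm factor G/G_0 has bounded period:
   some n >= 1 with (x G_0)^n = G_0, i.e. x^n in G_0, for all x *)
Definition ulm_factor_bounded (p : nat) : Prop :=
  exists n, 0 < n /\ forall x, G0 p (gpow x n).

Definition divisible_subgroup (H : T -> Prop) : Prop :=
  forall g, H g -> forall n, 0 < n -> exists h, H h /\ gpow h n = g.

End GroupDefs.

(* Since G/G_0 has bounded period, x^(p^e) has infinite height for every x,
   for some fixed e.  An element g of infinite height is g = x^(p^(e+1)) for
   some x, so g = h^p with h = x^(p^e) again of infinite height: G_0 is
   p-divisible.  For m coprime to p, x |-> x^m is a bijection of the p-group
   G whose inverse is itself a power map, and G_0 is closed under powers, so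
   G_0 is also m-divisible. *)
From mathcomp Require Import all_boot.
From mathcomp Require Import cyclic.
From Stdlib Require Import Classical.
Set Implicit Arguments. Unset Strict Implicit.

Section Powers.
Variables (T : Type) (mul : T -> T -> T) (inv : T -> T) (one : T).
Hypothesis groupT : is_group mul inv one.

Local Notation "x ^+ n" := (gpow mul one x n).

Lemma mulgV x : mul x (inv x) = one.
Proof.
case: groupT => mulA mul1g mulVg.
have -> : mul x (inv x) = mul (mul (inv (inv x)) (inv x)) (mul x (inv x)).
  by rewrite mulVg mul1g.
by rewrite -mulA (mulA (inv x)) mulVg mul1g mulVg.
Qed.

Lemma mulg1 x : mul x one = x.
Proof. by case: groupT => mulA mul1g mulVg; rewrite -(mulVg x) mulA mulgV mul1g. Qed.

Lemma expg1 x : x ^+ 1 = x.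
Proof. exact: mulg1. Qed.

Lemma expg1n n : one ^+ n = one.
Proof. by case: groupT => _ mul1g _; elim: n => //= n ->; rewrite mul1g. Qed.

Lemma expgD x m n : x ^+ (m + n) = mul (x ^+ m) (x ^+ n).
Proof.
case: groupT => mulA mul1g _.
by elim: m => [|m IHm] /=; rewrite ?mul1g // IHm mulA.
Qed.

Lemma expgM x m n : x ^+ (m * n) = (x ^+ m) ^+ n.
Proof. by elim: n => [|n IHn]; rewrite ?muln0 // mulnS expgD IHn. Qed.

Lemma expgAC x m n : (x ^+ m) ^+ n = (x ^+ n) ^+ m.
Proof. by rewrite -!expgM mulnC. Qed.

Lemma expg_modn x m d : x ^+ d = one -> x ^+ (m %% d) = x ^+ m.
Proof.
case: groupT => _ mul1g _ xd.
by rewrite {2}(divn_eq m d) expgD mulnC expgM xd expg1n mul1g.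
Qed.

Variable p : nat.
Hypothesis p_pr : prime p.
Hypothesis pgroupT : p_group mul one p.

(* The inverse of x |-> x^m is x |-> x^(m^(phi(p^k) - 1)), by Euler's theorem
   modulo the order p^k of x. *)
Lemma expg_coprime_root m x : coprime m p -> exists a, (x ^+ a) ^+ m = x.
Proof.
move=> co_m_p; have [k xk] := pgroupT x.
have phi_gt0 : 0 < totient (p ^ k) by rewrite totient_gt0 expn_gt0 prime_gt0.
exists (m ^ (totient (p ^ k)).-1).
rewrite -expgM -expnSr prednK // -(expg_modn _ xk).
by rewrite Euler_exp_totient ?coprimeXr // (expg_modn _ xk) expg1.
Qed.

Local Notation height_ge := (height_ge mul one p).
Local Notation G0p := (G0 mul one p).

Lemma height_ge_leq g m n : n <= m -> height_ge g m -> height_ge g n.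
Proof.
move=> le_nm [h <-]; exists (h ^+ (p ^ (m - n))).
by rewrite -expgM -expnD subnK.
Qed.

Lemma G0P g : G0p g <-> forall n, height_ge g n.
Proof.
split=> [G0g n | ht_g [n [_ max_n]]]; last by have := max_n _ (ht_g n.+1); rewrite ltnn.
apply: NNPP => not_ht_n; apply: G0g.
elim: n not_ht_n => [|n IHn] not_ht_n.
  by case: not_ht_n; exists g; rewrite expn0 expg1.
have [ht_n | ] := classic (height_ge g n); last exact: IHn.
exists n; split=> // m ht_m; rewrite leqNgt; apply/negP => lt_nm.
exact/not_ht_n/(height_ge_leq lt_nm ht_m).
Qed.

Lemma G0_expg g m : G0p g -> G0p (g ^+ m).
Proof.
move=> /G0P G0g; apply/G0P => n; have [h <-] := G0g n.
by exists (h ^+ m); rewrite expgAC.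
Qed.

Lemma G0_coprime_root m g : coprime m p -> G0p g -> exists2 h, G0p h & h ^+ m = g.
Proof.
move=> co_m_p G0g; have [a ga] := expg_coprime_root g co_m_p.
by exists (g ^+ a); first exact: G0_expg.
Qed.

Lemma ulm_factor_bounded_pexpn :
  ulm_factor_bounded mul one p -> exists e, forall x, G0p (x ^+ (p ^ e)).
Proof.
case=> n [n_gt0 G0_xn]; have [m co_p_m def_n] := pfactor_coprime p_pr n_gt0.
exists (logn p n) => x; rewrite coprime_sym in co_p_m.
by have [a <-] := expg_coprime_root x co_p_m; rewrite -expgM -def_n.
Qed.

Section BoundedUlmFactor.
Variable e : nat.
Hypothesis G0_pexpn : forall x, G0p (x ^+ (p ^ e)).

Lemma G0_p_root g : G0p g -> exists2 h, G0p h & h ^+ p = g.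
Proof.
move=> /G0P/(_ e.+1) [x <-].
by exists (x ^+ (p ^ e)); rewrite // -expgM -expnSr.
Qed.

Lemma G0_pexpn_root k g : G0p g -> exists2 h, G0p h & h ^+ (p ^ k) = g.
Proof.
elim: k g => [|k IHk] g G0g; first by exists g; rewrite ?expn0 ?expg1.
have [w G0w <-] := G0_p_root G0g; have [h G0h <-] := IHk w G0w.
by exists h; rewrite // expnSr expgM.
Qed.

End BoundedUlmFactor.
End Powers.

Theorem lemma2 (T : Type) (mul : T -> T -> T) (inv : T -> T) (one : T) (p : nat) :
  is_group mul inv one ->
  prime p ->
  p_group mul one p ->
  nilpotent mul inv one ->
  ulm_factor_bounded mul one p ->
  divisible_subgroup mul one (G0 mul one p).
Proof.
move=> groupT p_pr pgroupT _ /(ulm_factor_bounded_pexpn groupT p_pr pgroupT).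
move=> [e G0_pexpn] g G0g n n_gt0.
have [m co_p_m ->] := pfactor_coprime p_pr n_gt0.
have [w G0w <-] := G0_pexpn_root groupT G0_pexpn (logn p n) G0g.
rewrite coprime_sym in co_p_m.
have [h G0h <-] := G0_coprime_root groupT p_pr pgroupT co_p_m G0w.
by exists h; rewrite -(expgM groupT).
Qed.
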